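(* Consider the fixed $p$-processor cup game or the variable-processor cup game, in the non-negative-fill version, where the emptier has $\varepsilon$ resource augmentation ($\varepsilon>0$). Then for every state $A$ and every game length $t\ge0$, $\operatorname{GREEDY}(A,t)=\operatorname{OPT}(A,t)$.
   Context: A state is a multiset of $n$ real nonnegative fills. In each round the filler chooses an integer $1\le p\le n$ (fixed $p$ in the $p$-processor game) and reals $a_i\in[0,1]$ with $\sum a_i=p$ and adds $a_i$ to cup $i$; then the emptier chooses $p$ distinct cups and replaces each of their fills $x$ by $\max(0,x-(1+\varepsilon))$. Backlog = maximum fill. $\operatorname{OPT}(S,0)$ is the backlog of $S$ and $\operatorname{OPT}(S,t)=\sup_{S'}\min_{S''}\operatorname{OPT}(S'',t-1)$ with $S'$ over states reachable from $S$ by a filler move and $S''$ over states reachable from $S'$ by an emptier move. $\operatorname{GREEDY}(S,t)$ is the supremum backlog a filler can achieve after $t$ rounds from $S$ when the emptier always empties the $p$ fullest cups. *)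

From HB Require Import structures.
From mathcomp Require Import all_boot all_order all_algebra.
From mathcomp Require Import boolp classical_sets reals.
Set Implicit Arguments. Unset Strict Implicit. Unset Printing Implicit Defensive.
Import Order.TTheory GRing.Theory Num.Theory.
Local Open Scope ring_scope.
Local Open Scope classical_set_scope.

(* A state of n cups: fill of each cup (the multiset of fills, with labels;
   all quantities below are invariant under relabelling). *)
Definition state (R : realType) (n : nat) := 'I_n -> R.

Inductive game := FixedGame of nat | VariableGame.

Definition allowed (n : nat) (g : game) (p : nat) : bool :=
  match g with
  | FixedGame q => p == q
  | VariableGame => (1 <= p <= n)%N
  end.

Definition game_ok (n : nat) (g : game) : Prop :=
  match g with
  | FixedGame q => (1 <= q <= n)%N
  | VariableGame => True
  end.

(* backlog = maximum fill (fills are nonnegative; empty max = 0) *)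
Definition backlog (R : realType) (n : nat) (S : state R n) : R :=
  \big[Num.max/0]_(i < n) S i.

Definition filler_move (R : realType) (n : nat) (p : nat) (S S' : state R n) : Prop :=
  exists a : 'I_n -> R,
    (forall i, 0 <= a i <= 1) /\ \sum_(i < n) a i = p%:R /\
    (forall i, S' i = S i + a i).

Definition empty_cups (R : realType) (n : nat) (eps : R) (S : state R n)
    (E : {set 'I_n}) : state R n :=
  fun i => if i \in E then Num.max 0 (S i - (1 + eps)) else S i.

Definition fullest (R : realType) (n : nat) (S : state R n) (E : {set 'I_n}) : Prop :=
  forall i j, i \in E -> j \notin E -> S j <= S i.

Fixpoint OPT (R : realType) (n : nat) (g : game) (eps : R) (t : nat) (S : state R n)
    {struct t} : R :=
  match t with
  | 0 => backlog S
  | t'.+1 =>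
      sup [set v | exists p, allowed n g p /\ exists S' : state R n,
             filler_move p S S' /\
             v = inf [set w | exists E : {set 'I_n}, #|E| = p /\
                        w = OPT g eps t' (empty_cups eps S' E)]]
  end.

Fixpoint GREEDY (R : realType) (n : nat) (g : game) (eps : R) (t : nat) (S : state R n)
    {struct t} : R :=
  match t with
  | 0 => backlog S
  | t'.+1 =>
      sup [set v | exists p, allowed n g p /\ exists S' : state R n,
             filler_move p S S' /\
             exists E : {set 'I_n}, #|E| = p /\ fullest S' E /\
             v = GREEDY g eps t' (empty_cups eps S' E)]
  end.

From HB Require Import structures.
From mathcomp Require Import all_boot all_order all_algebra.
From mathcomp Require Import boolp classical_sets reals.
From mathcomp Require Import fingroup perm.
From mathcomp Require Import lra zify.
Import Order.TTheory GRing.Theory Num.Theory.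
Local Open Scope ring_scope.

(* Write d = 1 + eps.  Say that a state B dominates a state A if A <= B cupwise
   except on at most one pair of cups {i, j}, where either A_i <= B_j and
   A_j <= B_i, or A_i <= max(0, B_i - d), A_j <= B_i and A_j <= B_j + d (as when
   A is B with cup i emptied instead of a less full cup j).  Domination bounds
   the backlog and survives a round: a filler move on A is matched on B by the
   same move with some fill shifted between cups i and j, and an emptier move on
   B is matched on A by the same move, possibly with i and j exchanged.  Hence
   OPT is monotone under domination.  Since emptying a fuller cup instead of a
   less full one yields a dominated state, exchanging cups one at a time shows
   that emptying the p fullest cups minimises OPT over the emptier's moves, and
   GREEDY = OPT follows by induction on t. *)

Lemma max_cases {R : realDomainType} (x y : R) :
  x <= Num.max x y /\ y <= Num.max x y /\ (Num.max x y = x \/ Num.max x y = y).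
Proof.
rewrite !le_max !lexx orbT; do 2!split=> //.
by case: (leP x y) => [/max_r|/ltW/max_l]; [right|left].
Qed.

Ltac lra_max :=
  repeat match goal with |- context [@Order.max ?d ?T ?x ?y] =>
    have := max_cases x y; move: (@Order.max d T x y) => ? end;
  intros; lra.

Section SupInf.
Context {R : realType}.
Local Open Scope classical_set_scope.
Implicit Types A B E : set R.

Lemma sup_ge0 E : (forall x, E x -> 0 <= x) -> 0 <= sup E.
Proof.
move=> E_ge0; have [[[x Ex] ubE]|/sup_out ->//] := pselect (has_sup E).
exact: le_trans (E_ge0 x Ex) (ub_le_sup ubE Ex).
Qed.

Lemma inf_ge0 E : (forall x, E x -> 0 <= x) -> 0 <= inf E.
Proof.
move=> E_ge0; have [E0|/nonemptyPn ->] := pselect (E !=set0); last by rewrite inf0.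
exact: lb_le_inf.
Qed.

Lemma ge0_ge_sup E x : 0 <= x -> ubound E x -> sup E <= x.
Proof.
move=> x_ge0 ubx; have [E0|/nonemptyPn ->] := pselect (E !=set0); last by rewrite sup0.
exact: ge_sup.
Qed.

Lemma sup_le_sup A B : has_ubound B -> 0 <= sup B ->
  (forall x, A x -> exists2 y, B y & x <= y) -> sup A <= sup B.
Proof.
move=> ubB supB_ge0 AB; apply: ge0_ge_sup => // x /AB[y By xy].
exact: le_trans xy (ub_le_sup ubB By).
Qed.

Lemma inf_le_inf A B : has_lbound A -> B !=set0 ->
  (forall y, B y -> exists2 x, A x & x <= y) -> inf A <= inf B.
Proof.
move=> lbA B0 BA; apply: lb_le_inf => // y /BA[x Ax xy].
exact: le_trans (ge_inf lbA Ax) xy.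
Qed.

Lemma inf_attained E x : E x -> lbound E x -> inf E = x.
Proof.
move=> Ex lbx; apply/le_anti/andP; split; first by apply: ge_inf => //; exists x.
by apply: lb_le_inf => //; exists x.
Qed.

End SupInf.

Lemma exchange_card {T : finType} {E F : {set T}} {i j : T} :
  i \in E :\: F -> j \in F :\: E ->
  #|i |: (F :\ j)| = #|F| /\ (#|(i |: (F :\ j)) :\: E| < #|F :\: E|)%N.
Proof.
rewrite !inE => /andP[iF iE] /andP[jE jF]; split.
  by rewrite cardsU1 (cardsD1 j F) jF !inE (negbTE iF) andbF.
have ji : j != i by apply: contraNneq jE => ->.
apply: proper_card; apply/properP; split.
  apply/fintype.subsetP=> k; rewrite !inE => /andP[kE /orP[/eqP kei|/andP[_ ->]]].
    by rewrite kei iE in kE.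
  by rewrite kE.
by exists j; rewrite !inE ?eqxx jE jF ?(negbTE ji).
Qed.

Section Transfer.
Context {V : zmodType} {n : nat}.

Definition transfer (a : 'I_n -> V) (i j : 'I_n) (s : V) : 'I_n -> V :=
  fun k => a k + (if k == i then s else 0) - (if k == j then s else 0).

Lemma sum_transfer a i j s : \sum_k transfer a i j s k = \sum_k a k.
Proof. by rewrite sumrB big_split /= -!big_mkcond /= !big_pred1_eq addrK. Qed.

Lemma transfer_to a i j s : i != j -> transfer a i j s i = a i + s.
Proof. by move=> ij; rewrite /transfer eqxx (negbTE ij) subr0. Qed.

Lemma transfer_from a i j s : i != j -> transfer a i j s j = a j - s.
Proof. by move=> ij; rewrite /transfer eqxx eq_sym (negbTE ij) addr0. Qed.

Lemma transfer_other a i j s k : k != i -> k != j -> transfer a i j s k = a k.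
Proof. by move=> ki kj; rewrite /transfer (negbTE ki) (negbTE kj) addr0 subr0. Qed.

End Transfer.

Section PairDomination.
Context {R : realDomainType}.
Implicit Types d : R.

Definition pair_dominated d (ai aj bi bj : R) : Prop :=
  [\/ ai <= bi /\ aj <= bj, ai <= bj /\ aj <= bi
    | [/\ ai <= Num.max 0 (bi - d), aj <= bi & aj <= bj + d]].

Definition drain d (b : bool) (x : R) : R := if b then Num.max 0 (x - d) else x.

Lemma drain_le d b (x y : R) : x <= y -> drain d b x <= drain d b y.
Proof. by case: b => //= xy; move: xy; lra_max. Qed.

Lemma pair_dominated_fill {d Ai Aj Bi Bj ai aj : R} :
  0 <= Ai -> 0 <= Bj -> 0 <= ai <= 1 -> 0 <= aj <= 1 ->
  pair_dominated d Ai Aj Bi Bj ->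
  exists s, [/\ 0 <= ai + s <= 1, 0 <= aj - s <= 1
              & pair_dominated d (Ai + ai) (Aj + aj) (Bi + (ai + s)) (Bj + (aj - s))].
Proof.
move=> Ai_ge0 Bj_ge0 /andP[ai_ge0 ai_le1] /andP[aj_ge0 aj_le1].
have in01 x : 0 <= x -> x <= 1 -> 0 <= x <= 1 by move=> *; apply/andP.
have crosswise : Ai <= Bj -> Aj <= Bi -> exists s, [/\ 0 <= ai + s <= 1, 0 <= aj - s <= 1
    & pair_dominated d (Ai + ai) (Aj + aj) (Bi + (ai + s)) (Bj + (aj - s))].
  by move=> AiBj AjBi; exists (aj - ai); split; [apply: in01; lra.. | apply: Or32; lra].
case=> [[AiBi AjBj]|[]//|[AiBi AjBi AjBj]].
  by exists 0; split; [apply: in01; lra.. | apply: Or31; lra].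
have [Bi_lt_d|d_le_Bi] := ltP Bi d.
  by apply: crosswise => //; move: AiBi; lra_max.
have [lt_Aj|gt_Aj] := leP (Aj + aj) (Bi + ai).
  by exists 0; split; [apply: in01; lra.. | apply: Or33; split; move: AiBi; lra_max].
(* Otherwise B's filler raises cup i exactly to the new fill of A's cup j. *)
exists (Aj + aj - Bi - ai); split; [apply: in01; move: AiBi; lra_max..|].
by apply: Or32; split; move: AiBi; lra_max.
Qed.

Lemma pair_dominated_drain {d Ai Aj Bi Bj : R} (fi fj : bool) :
  0 <= d -> 0 <= Bi -> 0 <= Bj -> pair_dominated d Ai Aj Bi Bj ->
  exists sw : bool, pair_dominated d
    (drain d (if sw then fj else fi) Ai) (drain d (if sw then fi else fj) Aj)
    (drain d fi Bi) (drain d fj Bj).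
Proof.
move=> d_ge0 Bi_ge0 Bj_ge0 [[AiBi AjBj]|[AiBj AjBi]|[AiBi AjBi AjBj]].
- by exists false; apply: Or31; split; apply: drain_le.
- by exists true; apply: Or32; split; apply: drain_le.
case: fi; case: fj; [exists false | exists true | exists false | exists false].
- by apply: Or33; split; move: AiBi AjBi AjBj; rewrite /drain; lra_max.
- by apply: Or31; split; move: AiBi AjBi AjBj; rewrite /drain; lra_max.
- by apply: Or33; split; move: AiBi AjBi AjBj; rewrite /drain; lra_max.
- by apply: Or33.
Qed.

End PairDomination.

Section Backlog.
Context {R : realType} {n : nat}.
Implicit Types S : state R n.

Lemma backlog_ge0 S : 0 <= backlog S.
Proof. exact: bigmax_ge_id. Qed.

Lemma le_backlog S i : S i <= backlog S.
Proof. exact: le_bigmax. Qed.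

Lemma backlog_le S c : 0 <= c -> (forall i, S i <= c) -> backlog S <= c.
Proof. by move=> c_ge0 Sc; apply: bigmax_le. Qed.

End Backlog.

Section Domination.
Context {R : realType} {n : nat}.
Implicit Types (d : R) (A B : state R n).

Definition dominated d A B : Prop :=
  (forall k, A k <= B k) \/
  exists i j, [/\ i != j, (forall k, k != i -> k != j -> A k <= B k)
                & pair_dominated d (A i) (A j) (B i) (B j)].

Lemma dominated_backlog d A B : 0 <= d -> (forall k, 0 <= B k) ->
  dominated d A B -> backlog A <= backlog B.
Proof.
move=> d_ge0 B_ge0 AB; apply: backlog_le => [|k]; first exact: backlog_ge0.
suff [m Akm] : exists m, A k <= B m by exact: le_trans Akm (le_backlog B m).
case: AB => [AB|[i [j [_ ABo ABij]]]]; first by exists k.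
have [->|ki] := eqVneq k i.
  case: ABij => [[AiBi _]|[AiBj _]|[AiBi _ _]]; [by exists i|by exists j|exists i].
  by move: AiBi (B_ge0 i); lra_max.
have [->|kj] := eqVneq k j; last by exists k; exact: ABo.
by case: ABij => [[_ AjBj]|[_ AjBi]|[_ AjBi _]]; [exists j|exists i|exists i].
Qed.

Lemma dominated_fill {d : R} {p} {A A' B : state R n} :
  (forall k, 0 <= A k) -> (forall k, 0 <= B k) -> dominated d A B ->
  filler_move p A A' -> exists2 B', filler_move p B B' & dominated d A' B'.
Proof.
move=> A_ge0 B_ge0 [AB|[i [j [ij ABo ABij]]]] [a [a01 [suma A'E]]].
  by exists (fun k => B k + a k); [exists a | left=> k; rewrite A'E lerD2r].
have [s [ais ajs A'B']] := pair_dominated_fill (A_ge0 i) (B_ge0 j) (a01 i) (a01 j) ABij.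
exists (fun k => B k + transfer a i j s k).
  exists (transfer a i j s); split=> [k|]; last by rewrite sum_transfer.
  have [->|ki] := eqVneq k i; first by rewrite transfer_to.
  have [->|kj] := eqVneq k j; first by rewrite transfer_from.
  by rewrite transfer_other.
right; exists i, j; split=> // [k ki kj|].
  by rewrite A'E transfer_other // lerD2r; exact: ABo.
by rewrite !A'E transfer_to // transfer_from.
Qed.

Lemma empty_cupsE (eps : R) (S : state R n) E k :
  empty_cups eps S E k = drain (1 + eps) (k \in E) (S k).
Proof. by []. Qed.

Lemma dominated_empty {eps : R} {A B : state R n} (F : {set 'I_n}) :
  0 <= 1 + eps -> (forall k, 0 <= B k) -> dominated (1 + eps) A B ->
  exists2 E : {set 'I_n}, #|E| = #|F|
    & dominated (1 + eps) (empty_cups eps A E) (empty_cups eps B F).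
Proof.
move=> d_ge0 B_ge0 [AB|[i [j [ij ABo ABij]]]].
  by exists F => //; left=> k; apply: drain_le.
have [sw A'B'] := pair_dominated_drain (i \in F) (j \in F) d_ge0 (B_ge0 i) (B_ge0 j) ABij.
pose sigma : {perm 'I_n} := if sw then tperm i j else 1%g.
have sigma_other k : k != i -> k != j -> sigma k = k.
  by move=> ki kj; rewrite /sigma; case: (sw); rewrite ?tpermD 1?eq_sym ?perm1.
exists (sigma @^-1: F); first by rewrite card_preimset //; exact: perm_inj.
right; exists i, j; split=> // [k ki kj|].
  by rewrite !empty_cupsE inE sigma_other //; apply: drain_le; exact: ABo.
by rewrite !empty_cupsE !inE /sigma; case: (sw) A'B'; rewrite ?tpermL ?tpermR ?perm1.
Qed.

End Domination.

Section Moves.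
Context {R : realType} {n : nat}.
Implicit Types S : state R n.

Lemma filler_move_le {p S S'} : filler_move p S S' -> (p <= n)%N.
Proof.
move=> [a [a01 [suma _]]]; rewrite -(ler_nat R) -suma -[n in n%:R]card_ord -sumr_const.
by apply: ler_sum => k _; case/andP: (a01 k).
Qed.

Lemma filler_move_ge0 {p S S'} :
  (forall k, 0 <= S k) -> filler_move p S S' -> forall k, 0 <= S' k.
Proof.
move=> S_ge0 [a [a01 [_ S'E]]] k; rewrite S'E addr_ge0 //.
by case/andP: (a01 k).
Qed.

Lemma filler_move_backlog {p S S'} : filler_move p S S' -> backlog S' <= backlog S + 1.
Proof.
move=> [a [a01 [_ S'E]]]; apply: backlog_le => [|k]; first by rewrite addr_ge0 ?backlog_ge0.
by rewrite S'E lerD ?le_backlog //; case/andP: (a01 k).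
Qed.

Lemma empty_cups_ge0 (eps : R) S E :
  (forall k, 0 <= S k) -> forall k, 0 <= empty_cups eps S E k.
Proof. by move=> S_ge0 k; rewrite empty_cupsE /drain; case: ifP; rewrite ?le_max ?lexx. Qed.

Lemma empty_cups_backlog (eps : R) S E :
  0 <= 1 + eps -> backlog (empty_cups eps S E) <= backlog S.
Proof.
move=> d_ge0; apply: backlog_le => [|k]; first exact: backlog_ge0.
rewrite empty_cupsE /drain; case: ifP => _; last exact: le_backlog.
by move: (le_backlog S k) (backlog_ge0 S); lra_max.
Qed.

Lemma exists_fullest S {p} : (p <= n)%N -> exists2 E : {set 'I_n}, #|E| = p & fullest S E.
Proof.
elim: p => [|p IH] le_pn.
  by exists finset.set0 => [|i j]; rewrite ?cards0 ?inE.
have [E cardE fullE] := IH (ltnW le_pn).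
have /card_gt0P[j0 j0E] : (0 < #|~: E|)%N by move: (cardsC E); rewrite card_ord cardE; lia.
have [j jE maxj] := arg_maxP S j0E.
have jnE : j \notin E by rewrite -finset.in_setC.
have le_Sj k : k \notin E -> S k <= S j by rewrite -finset.in_setC; exact: maxj.
exists (j |: E); first by rewrite cardsU1 jnE cardE.
move=> i k; rewrite !inE => /orP[/eqP->|iE] /norP[_ kE]; last exact: fullE.
exact: le_Sj.
Qed.

End Moves.

Section Optimality.
Context {R : realType} {n : nat} (g : game) (eps : R).
Local Open Scope classical_set_scope.
Implicit Types (S : state R n) (t : nat).

Definition emptier_outcomes t S p : set R :=
  [set w | exists E : {set 'I_n}, #|E| = p /\ w = OPT g eps t (empty_cups eps S E)].

Lemma OPT_succ t S : OPT g eps t.+1 S = sup [set v | exists p, allowed n g p /\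
  exists S' : state R n, filler_move p S S' /\ v = inf (emptier_outcomes t S' p)].
Proof. by []. Qed.

Lemma OPT_ge0 t S : 0 <= OPT g eps t S.
Proof.
elim: t S => [|t IH] S; first exact: backlog_ge0.
by rewrite OPT_succ; apply: sup_ge0 => _ [p [_ [S' [_ ->]]]]; apply: inf_ge0 => _ [E [_ ->]].
Qed.

Lemma emptier_outcomes_lbound t S p : has_lbound (emptier_outcomes t S p).
Proof. by exists 0 => _ [E [_ ->]]; exact: OPT_ge0. Qed.

Lemma emptier_outcomes_nonempty t S p : (p <= n)%N -> emptier_outcomes t S p !=set0.
Proof.
move=> le_pn; have [E cardE _] := exists_fullest S le_pn.
by exists (OPT g eps t (empty_cups eps S E)), E.
Qed.

Lemma inf_emptier_outcomes_le t S (E : {set 'I_n}) :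
  inf (emptier_outcomes t S #|E|) <= OPT g eps t (empty_cups eps S E).
Proof. by apply: ge_inf; [exact: emptier_outcomes_lbound | exists E]. Qed.

Lemma inf_emptier_outcomes_le_backlog t S p S' : 0 <= 1 + eps ->
  (forall S0, OPT g eps t S0 <= backlog S0 + t%:R) -> filler_move p S S' ->
  inf (emptier_outcomes t S' p) <= backlog S + t.+1%:R.
Proof.
move=> d_ge0 OPT_le mv; have [E cardE _] := exists_fullest S' (filler_move_le mv).
rewrite -cardE; apply: le_trans (inf_emptier_outcomes_le t S' E) _.
have := empty_cups_backlog eps S' E d_ge0; have := filler_move_backlog mv.
by have := OPT_le (empty_cups eps S' E); rewrite -natr1; lra.
Qed.

Lemma OPT_le_backlog t S : 0 <= 1 + eps -> OPT g eps t S <= backlog S + t%:R.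
Proof.
move=> d_ge0; elim: t S => [|t IH] S; first by rewrite addr0.
rewrite OPT_succ; apply: ge0_ge_sup => [|_ [p [_ [S' [mv ->]]]]].
  by rewrite addr_ge0 ?backlog_ge0.
exact: inf_emptier_outcomes_le_backlog IH mv.
Qed.

Lemma OPT_dominated t (A B : state R n) : 0 <= 1 + eps ->
  (forall k, 0 <= A k) -> (forall k, 0 <= B k) -> dominated (1 + eps) A B ->
  OPT g eps t A <= OPT g eps t B.
Proof.
move=> d_ge0; elim: t A B => [|t IH] A B A_ge0 B_ge0 AB.
  exact: dominated_backlog AB.
rewrite !OPT_succ; apply: sup_le_sup.
- exists (backlog B + t.+1%:R) => _ [p [_ [B' [mvB ->]]]].
  exact: inf_emptier_outcomes_le_backlog (fun S0 => OPT_le_backlog t S0 d_ge0) mvB.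
- exact: OPT_ge0 t.+1 B.
move=> _ [p [gp [A' [mvA ->]]]].
have [B' mvB A'B'] := dominated_fill A_ge0 B_ge0 AB mvA.
have [A'_ge0 B'_ge0] := (filler_move_ge0 A_ge0 mvA, filler_move_ge0 B_ge0 mvB).
exists (inf (emptier_outcomes t B' p)); first by exists p; split=> //; exists B'.
apply: inf_le_inf; first exact: emptier_outcomes_lbound.
  exact: emptier_outcomes_nonempty (filler_move_le mvB).
move=> _ [F [cardF ->]].
have [E cardE EF] := dominated_empty F d_ge0 B'_ge0 A'B'.
exists (OPT g eps t (empty_cups eps A' E)); first by exists E; rewrite cardE.
by apply: IH EF; exact: empty_cups_ge0.
Qed.

Lemma empty_exchange_dominated (Z : state R n) (F : {set 'I_n}) i j :
  Z j <= Z i -> i \notin F -> j \in F ->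
  dominated (1 + eps) (empty_cups eps Z (i |: (F :\ j))) (empty_cups eps Z F).
Proof.
move=> Zji iF jF; have ij : i != j by apply: contraNneq iF => ->.
right; exists i, j; split=> // [k ki kj|].
  by rewrite !empty_cupsE !inE (negbTE ki) kj /=.
apply: Or33; rewrite !empty_cupsE !inE !eqxx [j == i]eq_sym (negbTE ij) (negbTE iF) jF.
by rewrite /drain /=; split=> //; lra_max.
Qed.

Lemma OPT_empty_fullest t (Z : state R n) (E F : {set 'I_n}) :
  0 <= 1 + eps -> (forall k, 0 <= Z k) -> fullest Z E -> #|F| = #|E| ->
  OPT g eps t (empty_cups eps Z E) <= OPT g eps t (empty_cups eps Z F).
Proof.
move=> d_ge0 Z_ge0 fullE; have [m] := ubnP #|F :\: E|.
elim: m F => // m IH F ltFm cardF.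
have [FE0|[j jFE]] := finset.set_0Vmem (F :\: E).
  suff -> : F = E by [].
  by apply/eqP; rewrite eqEcard cardF leqnn andbT -finset.setD_eq0 FE0.
have [i iEF] : exists i, i \in E :\: F.
  apply/card_gt0P; rewrite cardsD finset.setIC -cardF -cardsD.
  by apply/card_gt0P; exists j.
have [cardF' ltF'] := exchange_card iEF jFE.
move: iEF jFE; rewrite !inE => /andP[iF iE] /andP[jE jF].
apply: le_trans (IH (i |: (F :\ j)) _ _) _; [lia | by rewrite cardF' |].
apply: OPT_dominated => //; try exact: empty_cups_ge0.
by apply: empty_exchange_dominated => //; exact: fullE.
Qed.

Lemma inf_emptier_outcomes_fullest t (Z : state R n) (E : {set 'I_n}) :
  0 <= 1 + eps -> (forall k, 0 <= Z k) -> fullest Z E ->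
  inf (emptier_outcomes t Z #|E|) = OPT g eps t (empty_cups eps Z E).
Proof.
move=> d_ge0 Z_ge0 fullE; apply: inf_attained; first by exists E.
by move=> _ [F [cardF ->]]; exact: OPT_empty_fullest.
Qed.

End Optimality.

Theorem corollary4p5 (R : realType) (n : nat) (g : game) (eps : R) :
  0 < eps -> game_ok n g ->
  forall (A : state R n), (forall i, 0 <= A i) ->
  forall t : nat, GREEDY g eps t A = OPT g eps t A.
Proof.
move=> eps_gt0 _ A A_ge0 t; have d_ge0 : 0 <= 1 + eps by lra.
elim: t A A_ge0 => // t IH A A_ge0; rewrite OPT_succ /=; congr sup.
apply/seteqP; split=> v [p [gp [S' [mv v_def]]]]; have S'_ge0 := filler_move_ge0 A_ge0 mv.
- case: v_def => E [cardE [fullE ->]]; exists p; split=> //; exists S'; split=> //.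
  by rewrite -cardE inf_emptier_outcomes_fullest // IH //; exact: empty_cups_ge0.
- have [E cardE fullE] := exists_fullest S' (filler_move_le mv).
  exists p; split=> //; exists S'; split=> //; exists E; do 2!split=> //.
  by rewrite v_def -cardE inf_emptier_outcomes_fullest // IH //; exact: empty_cups_ge0.
Qed.
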